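(* Consider the following setting. There are $K$ arms and $T$ rounds; the loss of arm $i$ at round $t$ is $\ell_t(i)$. At the beginning of each round $t$ the learner is given numbers $m_t(i)$ and $\epsilon_t(i)\ge 0$, $i=1,\dots,K$, with the guarantee $|\ell_t(i)-m_t(i)|\le \epsilon_t(i)$ for all $i$. Let $j_t\in\arg\min_i\{m_t(i)-\epsilon_t(i)\}$ (ties broken in favour of the smallest $\epsilon_t(i)$, remaining ties arbitrarily). Call arm $i$ bad at round $t$ if $m_t(i)-\epsilon_t(i)>m_t(j_t)+\epsilon_t(j_t)$ and good otherwise. Define the transformed losses $\tilde\ell_t(i)=\ell_t(i)-m_t(j_t)+\epsilon_t(j_t)$ if $i$ is good and $\tilde\ell_t(i)=2\epsilon_t(j_t)$ if $i$ is bad. Let $\mathcal{A}$ be any online algorithm, and run the meta-algorithm which, at each round $t$: gets a recommended arm $\tilde I_t$ from $\mathcal{A}$; plays $I_t=\tilde I_t$ if $\tilde I_t$ is good and $I_t=j_t$ otherwise; and feeds $\mathcal{A}$ the feedback it would receive if the loss vector were $\tilde{\boldsymbol\ell}_t$ and its chosen arm were $\tilde I_t$. Suppose $\tilde I_t$ is drawn from a probability distribution $\tilde p_t(1),\dots,\tilde p_t(K)$, and let $p_t(1),\dots,p_t(K)$ be the induced distribution of $I_t$, i.e. $p_t(i)=\tilde p_t(i)$ if $i\ne j_t$ is good, $p_t(i)=0$ if $i$ is bad, and $p_t(j_t)=\tilde p_t(j_t)+\sum_{i\text{ bad}}\tilde p_t(i)$. Then for any fixed arm $a\in\{1,\dots,K\}$,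 \[ \sum_{t=1}^{T}\sum_{i=1}^{K}p_t(i)\ell_t(i)-\sum_{t=1}^{T}\ell_t(a)\;\le\;\sum_{t=1}^{T}\sum_{i=1}^{K}\tilde p_t(i)\tilde\ell_t(i)-\sum_{t=1}^{T}\tilde\ell_t(a). \] In particular, \[ \mathbb{E}\Big[\sum_{t=1}^{T}\ell_t(I_t)\Big]-\sum_{t=1}^{T}\ell_t(a)\;\le\;\mathbb{E}\Big[\sum_{t=1}^{T}\big(\tilde\ell_t(\tilde I_t)-\tilde\ell_t(a)\big)\Big], \] where the expectation is over the randomness of $\mathcal{A}$. Moreover, $\tilde\ell_t(i)\in[0,2(\epsilon_t(j_t)+\epsilon_t(i))]$ for every good $i$, and $\tilde\ell_t(i)=2\epsilon_t(j_t)$ for every bad $i$.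
   Context: The losses are fixed in advance by an oblivious adversary. $\mathcal{A}$ receives, after each round, a feedback that is a function $f_t(\boldsymbol\ell,I)$ of a loss vector and a chosen arm (e.g. $f_t(\boldsymbol\ell,I)=\ell(I)$ for bandit feedback, $f_t(\boldsymbol\ell,I)=\boldsymbol\ell$ for full information); it is assumed that $f_t(\tilde{\boldsymbol\ell}_t,\tilde I_t)$ can be computed from $f_t(\boldsymbol\ell_t,I_t)$ and the side information. *)

From HB Require Import structures.
From mathcomp Require Import all_boot all_order all_algebra.
From mathcomp Require Import all_classical all_reals all_analysis.
Set Implicit Arguments. Unset Strict Implicit. Unset Printing Implicit Defensive.
Import Order.TTheory GRing.Theory Num.Theory.
Local Open Scope ring_scope.

Section Defs.
Variables (R : realType) (K T : nat).
Variables (m eps : 'I_T -> 'I_K -> R) (j : 'I_T -> 'I_K).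

Definition good (t : 'I_T) (i : 'I_K) : bool :=
  m t i - eps t i <= m t (j t) + eps t (j t).

Definition ltil (l : 'I_T -> 'I_K -> R) (t : 'I_T) (i : 'I_K) : R :=
  if good t i then l t i - m t (j t) + eps t (j t) else 2 * eps t (j t).

Definition pmeta (pt : 'I_T -> 'I_K -> R) (t : 'I_T) (i : 'I_K) : R :=
  if i == j t then pt t (j t) + \sum_(k < K | ~~ good t k) pt t k
  else if good t i then pt t i else 0.

Definition played (t : 'I_T) (it : 'I_K) : 'I_K :=
  if good t it then it else j t.
End Defs.

From Pilot Require Import Defs.
From HB Require Import structures.
From mathcomp Require Import all_boot all_order all_algebra.
From mathcomp Require Import all_classical all_reals all_analysis.
From mathcomp Require Import lra.
Set Implicit Arguments.
Unset Strict Implicit.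
Unset Printing Implicit Defensive.
Import Order.TTheory GRing.Theory Num.Theory.
Local Open Scope ring_scope.

(* Let c_t := m_t(j_t) - eps_t(j_t), the smallest lower confidence bound of
   round t.  The transformed losses are built so that, for every
   recommendation i and every comparator a,
     l_t(played i) - ltil_t(i) <= c_t <= l_t(a) - ltil_t(a):
   for a good i the left-hand side equals c_t, and for a bad i the arm j_t is
   played, whose loss is at most m_t(j_t) + eps_t(j_t) = c_t + 2 eps_t(j_t).
   Hence the regret of the meta-algorithm is dominated round by round, on
   every path, by the regret of the base algorithm on the transformed losses;
   averaging over the recommendation gives both regret bounds, since p_t is
   the image of the recommendation distribution under the playing rule. *)

Section TransformedLosses.
Variables (R : realType) (K T : nat).
Variables (l m eps : 'I_T -> 'I_K -> R) (j : 'I_T -> 'I_K).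
Hypothesis eps_ge0 : forall t i, 0 <= eps t i.
Hypothesis loss_near_m : forall t i, `|l t i - m t i| <= eps t i.
Hypothesis lcb_min : forall t i, m t (j t) - eps t (j t) <= m t i - eps t i.

Local Notation good := (good m eps j).
Local Notation ltil := (ltil m eps j l).
Local Notation played := (played m eps j).

Lemma loss_bounds t i : m t i - eps t i <= l t i <= m t i + eps t i.
Proof.
by have := loss_near_m t i; rewrite ler_norml => /andP[? ?]; apply/andP; lra.
Qed.

Lemma good_j t : good t (j t).
Proof. by rewrite /Defs.good; have := eps_ge0 t (j t); lra. Qed.

Lemma ltil_bad t i : ~~ good t i -> ltil t i = 2 * eps t (j t).
Proof. by rewrite /Defs.ltil => /negbTE ->. Qed.

Lemma ltil_good_bounds t i :
  good t i -> 0 <= ltil t i <= 2 * (eps t (j t) + eps t i).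
Proof.
move=> gi; rewrite /Defs.ltil gi; move: gi; rewrite /Defs.good => gi.
have ? := lcb_min t i; have /andP[? ?] := loss_bounds t i.
by apply/andP; split; lra.
Qed.

Lemma lcb_le_loss_sub_ltil t i :
  m t (j t) - eps t (j t) <= l t i - ltil t i.
Proof.
rewrite /Defs.ltil; case: ifP => [_|/negbT]; first lra.
rewrite /Defs.good -ltNge => bad_i.
by have /andP[? ?] := loss_bounds t i; lra.
Qed.

Lemma loss_played_sub_ltil_le t i :
  l t (played t i) - ltil t i <= m t (j t) - eps t (j t).
Proof.
rewrite /Defs.played; case: (boolP (good t i)) => [gi|bad_i].
  by rewrite /Defs.ltil gi; lra.
by rewrite ltil_bad //; have /andP[_ ?] := loss_bounds t (j t); lra.
Qed.

Lemma regret_played_le t i a :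
  l t (played t i) - l t a <= ltil t i - ltil t a.
Proof.
by have := loss_played_sub_ltil_le t i; have := lcb_le_loss_sub_ltil t a; lra.
Qed.

Lemma sum_pmeta_comp (pt : 'I_T -> 'I_K -> R) t (f : 'I_K -> R) :
  \sum_(i < K) pmeta m eps j pt t i * f i =
  \sum_(i < K) pt t i * f (played t i).
Proof.
have pmeta_bad i : ~~ good t i -> pmeta m eps j pt t i = 0.
  move=> bad_i; rewrite /pmeta (negbTE bad_i); case: eqP => // ij.
  by move: bad_i; rewrite ij good_j.
rewrite [LHS](bigID (good t)) [RHS](bigID (good t)) /=.
rewrite [X in _ + X = _]big1 => [|i /pmeta_bad ->]; last by rewrite mul0r.
rewrite addr0 [LHS](bigD1 (j t)) ?good_j // [in RHS](bigD1 (j t)) ?good_j //=.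
rewrite /pmeta eqxx mulrDl big_distrl /= /Defs.played good_j -!addrA.
congr (_ + _); rewrite addrC; congr (_ + _).
  by apply: eq_bigr => i /andP[gi /negbTE ->]; rewrite gi.
by apply: eq_bigr => i /negbTE ->.
Qed.

Lemma round_regret_le (pt : 'I_T -> 'I_K -> R) t a :
  (forall i, 0 <= pt t i) -> \sum_(i < K) pt t i = 1 ->
  \sum_(i < K) pmeta m eps j pt t i * l t i - l t a
  <= \sum_(i < K) pt t i * ltil t i - ltil t a.
Proof.
move=> pt_ge0 pt_sum1.
have avg c : c = \sum_(i < K) pt t i * c by rewrite -big_distrl /= pt_sum1 mul1r.
rewrite sum_pmeta_comp [l t a]avg [ltil t a]avg -!sumrB.
apply: ler_sum => i _; rewrite -!mulrBr.
by apply: ler_wpM2l; [exact: pt_ge0 | exact: regret_played_le].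
Qed.

End TransformedLosses.

Section FiniteValuedIntegration.
Local Open Scope classical_set_scope.
Variables (d : measure_display) (Omega : measurableType d) (R : realType).

Lemma measurable_fun_comp_finite (K : nat) (F : 'I_K -> R) (X : Omega -> 'I_K) :
  (forall i, measurable (X @^-1` [set i])) ->
  measurable_fun setT (fun w => F (X w)).
Proof.
move=> mX _ B mB; rewrite setTI.
have -> : (fun w => F (X w)) @^-1` B =
          \bigcup_(i in [set i | B (F i)]) X @^-1` [set i].
  by apply/seteqP; split => [w Bw|w [i /= Bi ->]] //; exists (X w).
by apply: fin_bigcup_measurable => //; exact: finite_finset.
Qed.

Variable P : probability Omega R.

Lemma integrable_sum_comp_finite (K T : nat) (H : 'I_T -> 'I_K -> R)
    (X : 'I_T -> Omega -> 'I_K) :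
  (forall t i, measurable (X t @^-1` [set i])) ->
  P.-integrable setT (EFin \o (fun w => \sum_(t < T) H t (X t w))).
Proof.
move=> mX; apply: measurable_bounded_integrable => //.
- by rewrite (le_lt_trans (probability_le1 P measurableT)) ?ltry.
- by apply: measurable_sum => t; apply: measurable_fun_comp_finite.
exists (\sum_(t < T) \sum_(i < K) `|H t i|); split; first exact: num_real.
move=> M hM w _ /=; apply: le_trans (ltW hM).
apply: le_trans (ler_norm_sum _ _ _) _; apply: ler_sum => t _.
by rewrite (bigD1 (X t w)) //= lerDl; apply: sumr_ge0.
Qed.

Lemma probability_integralB_cst (f : Omega -> R) (c : R) :
  P.-integrable setT (EFin \o f) ->
  ((\int[P]_w (f w)%:E) - c%:E = \int[P]_w (f w - c)%:E)%E.
Proof.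
move=> intf.
rewrite integralB_EFin //; last exact: finite_measure_integrable_cst.
rewrite (_ : (fun w => (cst c w)%:E) = cst c%:E) // integral_cst //.
by rewrite [X in (_ * X)%E]probability_setT mule1.
Qed.

End FiniteValuedIntegration.

Theorem theorem1 (R : realType) (K T : nat)
  (l m eps : 'I_T -> 'I_K -> R) (j : 'I_T -> 'I_K)
  (heps : forall t i, 0 <= eps t i)
  (hl : forall t i, `|l t i - m t i| <= eps t i)
  (hj_min : forall t i, m t (j t) - eps t (j t) <= m t i - eps t i)
  (hj_tie : forall t i, m t i - eps t i = m t (j t) - eps t (j t) ->
                        eps t (j t) <= eps t i)
  (a : 'I_K) :
  (forall pt : 'I_T -> 'I_K -> R,
     (forall t i, 0 <= pt t i) -> (forall t, \sum_(i < K) pt t i = 1) ->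
     \sum_(t < T) \sum_(i < K) pmeta m eps j pt t i * l t i
       - \sum_(t < T) l t a
     <= \sum_(t < T) \sum_(i < K) pt t i * ltil m eps j l t i
       - \sum_(t < T) ltil m eps j l t a)
  /\
  (forall (d : measure_display) (Omega : measurableType d)
          (P : probability Omega R) (It : 'I_T -> Omega -> 'I_K),
     (forall t i, measurable (It t @^-1` [set i])) ->
     ((\int[P]_w (\sum_(t < T) l t (played m eps j t (It t w)))%:E)
        - (\sum_(t < T) l t a)%:E
      <= \int[P]_w (\sum_(t < T)
             (ltil m eps j l t (It t w) - ltil m eps j l t a))%:E)%E)
  /\
  (forall t i, good m eps j t i ->
     0 <= ltil m eps j l t i <= 2 * (eps t (j t) + eps t i))
  /\
  (forall t i, ~~ good m eps j t i -> ltil m eps j l t i = 2 * eps t (j t)).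
Proof.
split=> [pt pt_ge0 pt_sum1|].
  rewrite -!sumrB; apply: ler_sum => t _.
  exact: round_regret_le.
split=> [d Omega P It mIt|].
  have int_sum H := integrable_sum_comp_finite P H mIt.
  rewrite probability_integralB_cst;
    last exact: (int_sum (fun t i => l t (played m eps j t i))).
  apply: le_integral => //.
  - apply: eq_integrable
      (int_sum (fun t i => l t (played m eps j t i) - l t a)) => // w _.
    by rewrite /= sumrB.
  - exact: (int_sum (fun t i => ltil m eps j l t i - ltil m eps j l t a)).
  move=> w _; rewrite lee_fin -sumrB; apply: ler_sum => t _.
  exact: regret_played_le.
split; first exact: ltil_good_bounds.
exact: ltil_bad.
Qed.
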